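(* In the database model described in the context, let $0<\alpha\le1$, let $t_\alpha\ge0$ be the largest $t\ge0$ such that $P(LR(S)\ge t)\ge\alpha$, and let $\mathcal D_\alpha=\{i\in\{1,\dots,N\}: LR(P_i)\ge t_\alpha\}$. Then $t_\alpha$ exists, and, if $\pi_{\mathcal D}>0$, \[ P(R\in\mathcal D_\alpha\mid R\in\mathcal D)=P(LR(S)\ge t_\alpha)\ge\alpha, \] so that $P(R\in\mathcal D_\alpha)\ge\alpha\,P(R\in\mathcal D)$.
   Context: Let $E$ be a countable set and let $S$, $G$ be $E$-valued random variables such that for every $e\in E$, $P(S=e)>0$ implies $P(G=e)>0$. For $e\in E$ define the likelihood ratio $LR(e)=P(S=e)/P(G=e)$ if $P(G=e)>0$ and $LR(e)=0$ otherwise. Database model: fix $N\ge1$. Let $R$ be a random variable with values in $\{0,1,\dots,N\}$; we write $R\in\mathcal D$ for $R\in\{1,\dots,N\}$ and $R\notin\mathcal D$ for $R=0$. Put $\pi_i=P(R=i)$ for $1\le i\le N$ and $\pi_{\mathcal D}=\sum_{i=1}^N\pi_i$. There are $E$-valued random variables $P_1,\dots,P_N$ such that conditionally on $R=i$ with $1\le i\le N$, they are independent, $P_i$ has the distribution of $S$ and $P_j$ ($j\ne i$) has the distribution of $G$; and conditionally on $R=0$ they are independent, each with the distribution of $G$. *)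

From Stdlib Require Import Reals Lra Lia Classical.
Open Scope R_scope.

(* A probability on a sample space Omega, defined on all events (predicates),
   nonnegative, total mass 1, countably additive on pairwise disjoint events.
   (All random variables in the statement are discrete, so the power set is
   an adequate sigma-algebra.) *)
Record prob_space (Omega : Type) := {
  Pr : (Omega -> Prop) -> R;
  Pr_nonneg : forall A, 0 <= Pr A;
  Pr_total : Pr (fun _ => True) = 1;
  Pr_sigma_additive : forall A : nat -> Omega -> Prop,
    (forall m n w, m <> n -> A m w -> A n w -> False) ->
    infinite_sum (fun n => Pr (A n)) (Pr (fun w => exists n, A n w))
}.
Arguments Pr {Omega} _ _.

Definition LR {Omega E : Type} (P : prob_space Omega) (S G : Omega -> E) (e : E) : R :=
  if Rlt_dec 0 (Pr P (fun w => G w = e))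
  then Pr P (fun w => S w = e) / Pr P (fun w => G w = e)
  else 0.

Fixpoint prod1 (n : nat) (f : nat -> R) : R :=
  match n with
  | O => 1
  | S m => prod1 m f * f (S m)
  end.

(* Database model: R takes values in {0,...,N}; conditionally on R = i (1<=i<=N)
   P_1..P_N are independent, P_i ~ S and P_j ~ G (j<>i); conditionally on R = 0
   they are independent, all ~ G. *)
Definition database_model {Omega E : Type} (P : prob_space Omega)
  (S G : Omega -> E) (N : nat) (Rv : Omega -> nat) (Pv : nat -> Omega -> E) : Prop :=
  (forall w, (Rv w <= N)%nat) /\
  (forall (i : nat) (e : nat -> E), (i <= N)%nat ->
     Pr P (fun w => Rv w = i /\ forall j, (1 <= j <= N)%nat -> Pv j w = e j)
     = Pr P (fun w => Rv w = i) *
       prod1 N (fun j => if Nat.eq_dec j i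
                         then Pr P (fun w => S w = e j)
                         else Pr P (fun w => G w = e j))).

Definition is_t_alpha {Omega E : Type} (P : prob_space Omega) (S G : Omega -> E)
  (alpha t : R) : Prop :=
  0 <= t /\ Pr P (fun w => LR P S G (S w) >= t) >= alpha /\
  forall t', 0 <= t' -> Pr P (fun w => LR P S G (S w) >= t') >= alpha -> t' <= t.

From Stdlib Require Import Reals Lra Lia Classical.
From Stdlib Require Import FunctionalExtensionality PropExtensionality.
Open Scope R_scope.

(* 1. Elementary measure theory for [prob_space]: extensionality, null and
      disjoint unions, monotonicity, the decomposition of an event along the
      values of a nat-valued map ([Pr_partition]) and its consequence
      [Pr_proportional] (two events whose pieces are proportional have
      proportional probabilities), and continuity along decreasing families.
   2. The threshold: the tail t |-> P(L >= t) of a nonnegative variable L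
      vanishes at infinity and is left-continuous, so the supremum of
      {t >= 0 | P(L >= t) >= alpha} belongs to the set ([exists_threshold]).
   3. Marginals of the database model: from the joint law of
      (R, P_1, ..., P_N) one sums out coordinates one at a time (using a
      countable encoding of E) to show that on {R = i} the profile P_i has
      the law of S ([marginal_event]).
   4. The theorem: splitting {R in D_alpha} along the value of R and
      applying step 3 to each piece gives P(R in D_alpha) = P(LR(S) >= t) * pi_D. *)

Lemma Un_cv_const (c : R) : Un_cv (fun _ => c) c.
Proof.
  intros eps Heps; exists 0%nat; intros n _.
  unfold Rdist; rewrite Rminus_diag, Rabs_R0; lra.
Qed.

Lemma infinite_sum_terms_vanish (a : nat -> R) (l : R) :
  infinite_sum a l -> Un_cv a 0.
Proof.
  intro Hsum. apply (CV_shift a 1).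
  assert (Hterm : (fun n => a (n + 1)%nat) = (fun n => sum_f_R0 a (n + 1) - sum_f_R0 a n)).
  { apply functional_extensionality; intro n.
    rewrite Nat.add_1_r; simpl; ring. }
  rewrite Hterm, <- (Rminus_diag l).
  apply CV_minus; [apply CV_shift'|]; exact Hsum.
Qed.

Lemma infinite_sum_scal (a : nat -> R) (l c : R) :
  infinite_sum a l -> infinite_sum (fun n => c * a n) (c * l).
Proof.
  intro Hsum.
  assert (Hpartial : forall n, sum_f_R0 (fun k => c * a k) n = c * sum_f_R0 a n).
  { intro n; rewrite scal_sum; apply sum_eq; intros; ring. }
  unfold infinite_sum; setoid_rewrite Hpartial.
  exact (CV_mult _ _ _ _ (Un_cv_const c) Hsum).
Qed.

Section ProbabilityBasics.

Context {Omega : Type} (P : prob_space Omega).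

Lemma Pr_ext (A B : Omega -> Prop) :
  (forall w, A w <-> B w) -> Pr P A = Pr P B.
Proof.
  intro HAB; f_equal.
  apply functional_extensionality; intro w; apply propositional_extensionality, HAB.
Qed.

Lemma Pr_countable_union (A : nat -> Omega -> Prop) (B : Omega -> Prop) :
  (forall m n w, m <> n -> A m w -> A n w -> False) ->
  (forall w, B w <-> exists n, A n w) ->
  infinite_sum (fun n => Pr P (A n)) (Pr P B).
Proof.
  intros Hdisj HB; rewrite (Pr_ext B _ HB).
  exact (Pr_sigma_additive _ P A Hdisj).
Qed.

(* The empty event is null: it is the disjoint union of countably many copies of itself. *)
Lemma Pr_empty (A : Omega -> Prop) : (forall w, ~ A w) -> Pr P A = 0.
Proof.
  intro Hempty.
  assert (Hsum : infinite_sum (fun _ => Pr P A) (Pr P A)).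
  { apply Pr_countable_union.
    - intros m n w _ HA; exfalso; exact (Hempty w HA).
    - intro w; split; [intro HA; exists 0%nat; exact HA | intros [_ HA]; exact HA]. }
  exact (UL_sequence _ _ _ (Un_cv_const _) (infinite_sum_terms_vanish _ _ Hsum)).
Qed.

Lemma Pr_disjoint_union (A B C : Omega -> Prop) :
  (forall w, A w -> B w -> False) -> (forall w, C w <-> A w \/ B w) ->
  Pr P C = Pr P A + Pr P B.
Proof.
  intros Hdisj HC.
  set (D := fun n : nat => match n with O => A | 1%nat => B | _ => fun _ => False end).
  assert (Hsum : infinite_sum (fun n => Pr P (D n)) (Pr P C)).
  { apply Pr_countable_union.
    - intros [|[|m]] [|[|n]] w Hmn; simpl; solve [tauto | lia | eauto].
    - intro w; rewrite HC; split.
      + intros [HA|HB]; [exists 0%nat | exists 1%nat]; assumption.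
      + intros [[|[|n]] Hw]; simpl in Hw; tauto. }
  assert (Htail : forall n, sum_f_R0 (fun k => Pr P (D k)) (S n) = Pr P A + Pr P B).
  { induction n as [|n IH]; [reflexivity|].
    rewrite tech5, IH, (Pr_empty (D (S (S n)))) by (simpl; tauto); ring. }
  apply (UL_sequence (fun n => sum_f_R0 (fun k => Pr P (D k)) (n + 1))).
  - apply CV_shift'; exact Hsum.
  - replace (fun n => sum_f_R0 (fun k => Pr P (D k)) (n + 1))
      with (fun _ : nat => Pr P A + Pr P B); [apply Un_cv_const|].
    apply functional_extensionality; intro n; rewrite Nat.add_1_r; symmetry; apply Htail.
Qed.

Lemma Pr_mono (A B : Omega -> Prop) : (forall w, A w -> B w) -> Pr P A <= Pr P B.
Proof.
  intro HAB.
  rewrite (Pr_disjoint_union A (fun w => B w /\ ~ A w) B).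
  - pose proof (Pr_nonneg _ P (fun w => B w /\ ~ A w)); lra.
  - intros w HA [_ HnA]; exact (HnA HA).
  - intro w; destruct (classic (A w)); split; intuition.
Qed.

Lemma Pr_partition (A : Omega -> Prop) (f : Omega -> nat) :
  infinite_sum (fun n => Pr P (fun w => A w /\ f w = n)) (Pr P A).
Proof.
  apply Pr_countable_union.
  - intros m n w Hmn [_ Hm] [_ Hn]; congruence.
  - intro w; split; [intro HA; exists (f w); auto | intros [n [HA _]]; exact HA].
Qed.

Lemma Pr_proportional (A B : Omega -> Prop) (f g : Omega -> nat) (c : R) :
  (forall n, Pr P (fun w => A w /\ f w = n) = c * Pr P (fun w => B w /\ g w = n)) ->
  Pr P A = c * Pr P B.
Proof.
  intro Hpieces.
  apply (uniqueness_sum (fun n => c * Pr P (fun w => B w /\ g w = n))).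
  - replace (fun n => c * Pr P (fun w => B w /\ g w = n))
      with (fun n => Pr P (fun w => A w /\ f w = n))
      by (apply functional_extensionality; exact Hpieces).
    apply Pr_partition.
  - apply infinite_sum_scal, Pr_partition.
Qed.

Lemma first_exit (A : nat -> Omega -> Prop) (w : Omega) (m : nat) :
  A 0%nat w -> ~ A m w -> exists k, A k w /\ ~ A (S k) w.
Proof.
  induction m as [|m IH]; intros H0 Hm; [contradiction|].
  destruct (classic (A m w)) as [HAm|HAm]; [exists m; auto | exact (IH H0 HAm)].
Qed.

(* A 0 is partitioned into the
   intersection and the differences A k \ A (k+1), whose partial sums telescope. *)
Lemma Pr_decreasing_limit (A : nat -> Omega -> Prop) :
  (forall n w, A (S n) w -> A n w) ->
  Un_cv (fun n => Pr P (A n)) (Pr P (fun w => forall n, A n w)).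
Proof.
  intro Hdecr.
  assert (Hmono : forall n m w, (n <= m)%nat -> A m w -> A n w)
    by (intros n m w Hnm; induction Hnm; auto).
  set (Inter := fun w => forall n, A n w).
  set (D := fun n => match n with O => Inter | S k => fun w => A k w /\ ~ A (S k) w end).
  assert (Hsum : infinite_sum (fun n => Pr P (D n)) (Pr P (A 0%nat))).
  { apply Pr_countable_union.
    - intros [|m] [|n] w Hmn; simpl; unfold Inter.
      + lia.
      + intros Hall [_ Hn]; exact (Hn (Hall (S n))).
      + intros [_ Hm] Hall; exact (Hm (Hall (S m))).
      + intros [Hm Hm'] [Hn Hn'].
        destruct (Nat.lt_total m n) as [Hlt|[Heq|Hlt]]; [| lia |].
        * exact (Hm' (Hmono (S m) n w Hlt Hn)).
        * exact (Hn' (Hmono (S n) m w Hlt Hm)).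
    - intro w; split.
      + intro H0. destruct (classic (Inter w)) as [Hall|Hnot]; [exists 0%nat; exact Hall|].
        apply not_all_ex_not in Hnot; destruct Hnot as [m Hm].
        destruct (first_exit A w m H0 Hm) as [k Hk]; exists (S k); exact Hk.
      + intros [[|n] Hn]; [exact (Hn 0%nat)|].
        exact (Hmono 0%nat n w (Nat.le_0_l n) (proj1 Hn)). }
  assert (Hpartial : forall n,
             Pr P (A n) = Pr P Inter + Pr P (A 0%nat) - sum_f_R0 (fun k => Pr P (D k)) n).
  { induction n as [|n IH]; [simpl; ring|].
    rewrite tech5; simpl D.
    rewrite (Pr_disjoint_union (A (S n)) (fun w => A n w /\ ~ A (S n) w) (A n)) in IH.
    - lra.
    - intros w HS [_ HnS]; exact (HnS HS).
    - intro w; destruct (classic (A (S n) w)); split; intuition. }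
  replace (fun n => Pr P (A n))
    with (fun n => (Pr P Inter + Pr P (A 0%nat)) - sum_f_R0 (fun k => Pr P (D k)) n)
    by (apply functional_extensionality; intro n; symmetry; apply Hpartial).
  pose proof (CV_minus _ _ _ _ (Un_cv_const (Pr P Inter + Pr P (A 0%nat))) Hsum) as Hlim.
  replace (Pr P Inter + Pr P (A 0%nat) - Pr P (A 0%nat)) with (Pr P Inter) in Hlim by ring.
  exact Hlim.
Qed.

End ProbabilityBasics.

Section Threshold.

Context {Omega : Type} (P : prob_space Omega) (L : Omega -> R).

(* The tail P(L >= n) tends to 0, since no point has L w >= n for all n. *)
Lemma tail_vanishes : Un_cv (fun n => Pr P (fun w => L w >= INR n)) 0.
Proof.
  rewrite <- (Pr_empty P (fun w => forall n, L w >= INR n)).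
  - apply Pr_decreasing_limit; intros n w; rewrite S_INR; lra.
  - intros w Hall; destruct (INR_unbounded (L w)) as [n Hn]; specialize (Hall n); lra.
Qed.

Lemma tail_left_limit (m : R) :
  Un_cv (fun n => Pr P (fun w => L w >= m - / (INR n + 1))) (Pr P (fun w => L w >= m)).
Proof.
  rewrite (Pr_ext P _ (fun w => forall n, L w >= m - / (INR n + 1))).
  - apply Pr_decreasing_limit; intros n w.
    rewrite S_INR; pose proof (pos_INR n).
    assert (/ (INR n + 1 + 1) <= / (INR n + 1)) by (apply Rinv_le_contravar; lra).
    lra.
  - intro w; split.
    + intros Hm n; pose proof (pos_INR n).
      assert (0 < / (INR n + 1)) by (apply Rinv_0_lt_compat; lra); lra.
    + intro Hall; apply Rnot_lt_ge; intro Hlt.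
      destruct (INR_unbounded (/ (m - L w))) as [n Hn]; specialize (Hall n).
      pose proof (pos_INR n).
      assert (Hinv : / (INR n + 1) < / / (m - L w))
        by (apply Rinv_lt_contravar; [apply Rmult_lt_0_compat; [apply Rinv_0_lt_compat|]|]; lra).
      rewrite Rinv_inv in Hinv; lra.
Qed.

(* The largest t >= 0 with P(L >= t) >= alpha exists: it is the supremum of the
   set of such t, bounded because the tail vanishes, and attained by
   left-continuity of the tail. *)
Lemma exists_threshold (alpha : R) :
  (forall w, 0 <= L w) -> 0 < alpha <= 1 ->
  exists t, 0 <= t /\ Pr P (fun w => L w >= t) >= alpha /\
    forall t', 0 <= t' -> Pr P (fun w => L w >= t') >= alpha -> t' <= t.
Proof.
  intros HL Halpha.
  set (tail := fun t => Pr P (fun w => L w >= t)).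
  assert (Hanti : forall t1 t2, t1 <= t2 -> tail t2 <= tail t1)
    by (intros; apply Pr_mono; intros; lra).
  set (T := fun t => 0 <= t /\ tail t >= alpha).
  assert (HT0 : T 0).
  { split; [lra|]; unfold tail.
    rewrite (Pr_ext P _ (fun _ => True)), Pr_total by (intro w; specialize (HL w); split; auto; lra).
    lra. }
  assert (Hbound : bound T).
  { destruct (tail_vanishes alpha (proj1 Halpha)) as [n0 Hn0].
    specialize (Hn0 n0 (Nat.le_refl n0)); unfold Rdist in Hn0.
    rewrite Rminus_0_r, Rabs_right in Hn0 by apply Rle_ge, Pr_nonneg.
    exists (INR n0); intros t [_ Ht]; apply Rnot_lt_le; intro Hlt.
    pose proof (Hanti (INR n0) t (Rlt_le _ _ Hlt)); unfold tail in *; lra. }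
  destruct (completeness T Hbound (ex_intro _ 0 HT0)) as [m [Hub Hleast]].
  exists m; split; [exact (Hub 0 HT0)|]; split.
  - apply Rle_ge, (Rle_cv_lim (Un := fun _ => alpha) (Vn := fun n => tail (m - / (INR n + 1)))).
    + intro n; pose proof (pos_INR n).
      assert (0 < / (INR n + 1)) by (apply Rinv_0_lt_compat; lra).
      destruct (classic (exists t, T t /\ m - / (INR n + 1) < t)) as [[t [[_ Ht] Hlt]]|Hnone].
      * pose proof (Hanti _ _ (Rlt_le _ _ Hlt)); lra.
      * assert (Hub' : is_upper_bound T (m - / (INR n + 1))).
        { intros t Ht; apply Rnot_lt_le; intro Hlt; apply Hnone; exists t; auto. }
        specialize (Hleast _ Hub'); lra.
    + apply Un_cv_const.
    + apply tail_left_limit.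
  - intros t' Ht'0 Ht'; apply Hub; split; assumption.
Qed.

End Threshold.

Lemma prod1_ext (N : nat) (a b : nat -> R) :
  (forall j, (1 <= j <= N)%nat -> a j = b j) -> prod1 N a = prod1 N b.
Proof.
  induction N as [|N IH]; intro Hab; simpl; [reflexivity|].
  rewrite IH by (intros; apply Hab; lia); rewrite Hab by lia; reflexivity.
Qed.

Lemma prod1_one (N : nat) : prod1 N (fun _ => 1) = 1.
Proof. induction N as [|N IH]; simpl; [reflexivity | rewrite IH; ring]. Qed.

Lemma prod1_split (N k : nat) (a b : nat -> R) (c : R) : (1 <= k <= N)%nat ->
  (forall j, (1 <= j <= N)%nat -> j <> k -> a j = b j) -> a k = b k * c ->
  prod1 N a = prod1 N b * c.
Proof.
  induction N as [|N IH]; intros Hk Hab Hc; [lia|]; simpl.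
  destruct (Nat.eq_dec k (S N)) as [->|Hne].
  - rewrite (prod1_ext N a b), Hc by (intros; apply Hab; lia); ring.
  - rewrite IH; [| lia | intros; apply Hab; lia | exact Hc].
    rewrite (Hab (S N)) by lia; ring.
Qed.

Section DatabaseMarginals.

Context {Omega E : Type} (P : prob_space Omega).
Variables (enc : E -> nat) (Sv Gv : Omega -> E) (N : nat) (Rv : Omega -> nat)
  (Pv : nat -> Omega -> E).
Hypothesis enc_inj : forall x y, enc x = enc y -> x = y.
Hypothesis joint_law : forall (i : nat) (e : nat -> E), (i <= N)%nat ->
  Pr P (fun w => Rv w = i /\ forall j, (1 <= j <= N)%nat -> Pv j w = e j)
  = Pr P (fun w => Rv w = i) *
    prod1 N (fun j => if Nat.eq_dec j i
                      then Pr P (fun w => Sv w = e j)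
                      else Pr P (fun w => Gv w = e j)).

Variable i : nat.
Hypothesis i_le_N : (i <= N)%nat.

(* On {R = i}, coordinate j of the database is distributed like [coord_rv j]:
   the source profile S for j = i, a generic profile G otherwise. *)
Definition coord_rv (j : nat) : Omega -> E := if Nat.eq_dec j i then Sv else Gv.

Definition coord_law (j : nat) (y : E) : R :=
  if Nat.eq_dec j i then Pr P (fun w => Sv w = y) else Pr P (fun w => Gv w = y).

Lemma coord_law_rv (j : nat) (y : E) : coord_law j y = Pr P (fun w => coord_rv j w = y).
Proof. unfold coord_law, coord_rv; destruct (Nat.eq_dec j i); reflexivity. Qed.

Definition constrained (c : nat -> bool) (e : nat -> E) (w : Omega) : Prop :=
  Rv w = i /\ forall j, (1 <= j <= N)%nat -> c j = true -> Pv j w = e j.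

Definition factorizes (c : nat -> bool) : Prop :=
  forall e, Pr P (constrained c e)
            = Pr P (fun w => Rv w = i) * prod1 N (fun j => if c j then coord_law j (e j) else 1).

Lemma factorizes_ext (c c' : nat -> bool) :
  (forall j, (1 <= j <= N)%nat -> c j = c' j) -> factorizes c -> factorizes c'.
Proof.
  intros Hcc' Hc e.
  rewrite (Pr_ext P _ (constrained c e)).
  - rewrite Hc; f_equal; apply prod1_ext; intros j Hj; rewrite Hcc' by exact Hj; reflexivity.
  - intro w; unfold constrained; split; intros [HR Hw]; split; auto;
      intros j Hj Hcj; apply Hw; rewrite ?Hcc' in *; auto.
Qed.

Lemma factorizes_full : factorizes (fun _ => true).
Proof.
  intro e; unfold constrained.
  rewrite (Pr_ext P _ (fun w => Rv w = i /\ forall j, (1 <= j <= N)%nat -> Pv j w = e j))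
    by (intro w; split; intros [HR Hw]; split; auto).
  exact (joint_law i e i_le_N).
Qed.

(* Summing out one selected coordinate j0: the pieces {P_j0 = y} contribute the
   factor coord_law j0 y, and these sum to 1 over the (encoded) values y. *)
Lemma factorizes_drop (j0 : nat) (c c' : nat -> bool) :
  (1 <= j0 <= N)%nat -> c j0 = true -> c' j0 = false ->
  (forall j, j <> j0 -> c' j = c j) ->
  factorizes c -> factorizes c'.
Proof.
  intros Hj0 Hcj0 Hc'j0 Hcc' Hc e.
  set (law' := prod1 N (fun j => if c' j then coord_law j (e j) else 1)).
  transitivity (Pr P (fun w => Rv w = i) * law' * Pr P (fun _ => True));
    [| rewrite Pr_total; ring].
  apply (Pr_proportional P _ _ (fun w => enc (Pv j0 w)) (fun w => enc (coord_rv j0 w))).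
  intro n; destruct (classic (exists y, enc y = n)) as [[y Hy]|Hnone].
  -
    set (e' := fun j => if Nat.eq_dec j j0 then y else e j).
    rewrite (Pr_ext P _ (constrained c e')), Hc.
    + rewrite (Pr_ext P (fun w => True /\ enc (coord_rv j0 w) = n) (fun w => coord_rv j0 w = y)),
        <- coord_law_rv.
      * rewrite Rmult_assoc; f_equal; apply (prod1_split N j0); auto.
        -- intros j _ Hj; unfold e'; rewrite Hcc' by exact Hj.
           destruct (Nat.eq_dec j j0); [contradiction | reflexivity].
        -- unfold e'; rewrite Hcj0, Hc'j0; destruct (Nat.eq_dec j0 j0); [ring | contradiction].
      * intro w; split; [intros [_ Hw]; apply enc_inj; congruence | intros ->; auto].
    + intro w; unfold constrained, e'; split.
      * intros [[HR Hw] Hn]; split; [exact HR|]; intros j Hj Hcj.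
        destruct (Nat.eq_dec j j0) as [->|Hne]; [apply enc_inj; congruence|].
        apply Hw; [exact Hj | rewrite Hcc'; assumption].
      * intros [HR Hw]; split; [split; [exact HR|]|].
        -- intros j Hj Hc'j; specialize (Hw j Hj).
           destruct (Nat.eq_dec j j0) as [->|Hne]; [congruence|].
           apply Hw; rewrite <- Hcc'; assumption.
        -- specialize (Hw j0 Hj0 Hcj0); destruct (Nat.eq_dec j0 j0); [|contradiction].
           rewrite Hw; exact Hy.
  - rewrite (Pr_empty P (fun w => constrained c' e w /\ enc (Pv j0 w) = n)),
            (Pr_empty P (fun w => True /\ enc (coord_rv j0 w) = n))
      by (intros w [_ Hw]; apply Hnone; eauto).
    ring.
Qed.

(* Every selection factorizes: starting from the full selection, the coordinates
   1..N not in [c] are dropped one after the other. *)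
Lemma factorizes_any (c : nat -> bool) : factorizes c.
Proof.
  (* [keep k] selects the coordinates of [c] together with all coordinates above k *)
  set (keep := fun k j => orb (c j) (Nat.ltb k j)).
  assert (Hkeep : forall k, (k <= N)%nat -> factorizes (keep k)).
  { induction k as [|k IH]; intro Hk.
    - apply (factorizes_ext (fun _ => true)); [|exact factorizes_full].
      intros j Hj; unfold keep; rewrite (proj2 (Nat.ltb_lt 0 j)) by lia.
      now rewrite Bool.orb_true_r.
    - destruct (c (S k)) eqn:HcSk.
      + apply (factorizes_ext (keep k)); [|apply IH; lia].
        intros j Hj; unfold keep.
        destruct (Nat.eq_dec j (S k)) as [->|Hne]; [now rewrite HcSk|].
        f_equal; apply Bool.eq_iff_eq_true; rewrite !Nat.ltb_lt; lia.
      + apply (factorizes_drop (S k) (keep k)); try lia.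
        * unfold keep; apply Bool.orb_true_iff; right; apply Nat.ltb_lt; lia.
        * unfold keep; rewrite HcSk; apply Nat.ltb_ge; lia.
        * intros j Hne; unfold keep; f_equal.
          apply Bool.eq_iff_eq_true; rewrite !Nat.ltb_lt; lia.
        * apply IH; lia. }
  apply (factorizes_ext (keep N)); [|apply Hkeep, Nat.le_refl].
  intros j Hj; unfold keep; rewrite (proj2 (Nat.ltb_ge N j)) by lia.
  apply Bool.orb_false_r.
Qed.

Lemma marginal_point (x : E) : (1 <= i)%nat ->
  Pr P (fun w => Rv w = i /\ Pv i w = x) = Pr P (fun w => Rv w = i) * Pr P (fun w => Sv w = x).
Proof.
  intro Hi.
  rewrite (Pr_ext P _ (constrained (fun j => Nat.eqb j i) (fun _ => x))).
  - rewrite factorizes_any; f_equal.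
    transitivity (prod1 N (fun _ => 1) * Pr P (fun w => Sv w = x)); [| rewrite prod1_one; ring].
    apply (prod1_split N i); [lia| |].
    + intros j _ Hj; rewrite (proj2 (Nat.eqb_neq j i) Hj); reflexivity.
    + rewrite Nat.eqb_refl; unfold coord_law; destruct (Nat.eq_dec i i); [ring | contradiction].
  - intro w; unfold constrained; split.
    + intros [HR Hx]; split; [exact HR|]; intros j _ Hj; apply Nat.eqb_eq in Hj; rewrite Hj; exact Hx.
    + intros [HR Hw]; split; [exact HR|]; apply Hw; [lia | apply Nat.eqb_refl].
Qed.

(* The same for an arbitrary event {P_i in Q}, by decomposing Q into points. *)
Lemma marginal_event (Q : E -> Prop) : (1 <= i)%nat ->
  Pr P (fun w => Rv w = i /\ Q (Pv i w)) = Pr P (fun w => Rv w = i) * Pr P (fun w => Q (Sv w)).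
Proof.
  intro Hi.
  apply (Pr_proportional P _ _ (fun w => enc (Pv i w)) (fun w => enc (Sv w))).
  intro n; destruct (classic (exists y, enc y = n /\ Q y)) as [[y [Hy HQ]]|Hnone].
  - rewrite (Pr_ext P _ (fun w => Rv w = i /\ Pv i w = y)),
            (Pr_ext P (fun w => Q (Sv w) /\ _) (fun w => Sv w = y)).
    + exact (marginal_point y Hi).
    + intro w; split; [intros [_ Hw]; apply enc_inj; congruence | intros ->; auto].
    + intro w; split; [intros [[HR _] Hw]; split; [exact HR | apply enc_inj; congruence]
                      | intros [HR ->]; auto].
  - rewrite (Pr_empty P (fun w => (Rv w = i /\ Q (Pv i w)) /\ enc (Pv i w) = n)),
            (Pr_empty P (fun w => Q (Sv w) /\ enc (Sv w) = n))
      by (intro w; firstorder).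
    ring.
Qed.

End DatabaseMarginals.

Lemma LR_nonneg {Omega E : Type} (P : prob_space Omega) (S G : Omega -> E) (e : E) :
  0 <= LR P S G e.
Proof.
  unfold LR; destruct (Rlt_dec 0 (Pr P (fun w => G w = e))) as [Hpos|]; [|lra].
  apply Rmult_le_pos; [apply Pr_nonneg | left; apply Rinv_0_lt_compat, Hpos].
Qed.

Theorem mainTheorem5 (Omega E : Type) (P : prob_space Omega)
  (cntE : exists f : E -> nat, forall x y, f x = f y -> x = y)
  (S G : Omega -> E)
  (abscont : forall e, Pr P (fun w => S w = e) > 0 -> Pr P (fun w => G w = e) > 0)
  (N : nat) (HN : (1 <= N)%nat)
  (Rv : Omega -> nat) (Pv : nat -> Omega -> E)
  (Hdb : database_model P S G N Rv Pv)
  (alpha : R) (Halpha : 0 < alpha <= 1) :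
  (exists t, is_t_alpha P S G alpha t) /\
  forall t, is_t_alpha P S G alpha t ->
    let piD := Pr P (fun w => (1 <= Rv w <= N)%nat) in
    let inDalpha := fun w => (1 <= Rv w <= N)%nat /\ LR P S G (Pv (Rv w) w) >= t in
    piD > 0 ->
    Pr P (fun w => inDalpha w /\ (1 <= Rv w <= N)%nat) / piD
      = Pr P (fun w => LR P S G (S w) >= t) /\
    Pr P (fun w => LR P S G (S w) >= t) >= alpha /\
    Pr P inDalpha >= alpha * piD.
Proof.
  destruct cntE as [enc enc_inj]; destruct Hdb as [_ joint_law].
  split.
  - apply (exists_threshold P (fun w => LR P S G (S w)) alpha); [|exact Halpha].
    intro w; apply LR_nonneg.
  - intros t [_ [Htail _]] piD inDalpha HpiD.
    set (p := Pr P (fun w => LR P S G (S w) >= t)).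
    assert (Hsize : Pr P inDalpha = p * piD).
    { apply (Pr_proportional P _ _ Rv Rv); intro i.
      destruct (classic (1 <= i <= N)%nat) as [Hi|Hi].
      - rewrite (Pr_ext P (fun w => inDalpha w /\ Rv w = i)
                          (fun w => Rv w = i /\ LR P S G (Pv i w) >= t)),
                (Pr_ext P (fun w => (1 <= Rv w <= N)%nat /\ Rv w = i) (fun w => Rv w = i)).
        + rewrite (marginal_event P enc S G N Rv Pv enc_inj joint_law i (proj2 Hi)
                     (fun e => LR P S G e >= t) (proj1 Hi)).
          unfold p; ring.
        + intro w; split; [intros [_ ->]; reflexivity | intros ->; auto].
        + intro w; unfold inDalpha; split; [intros [[_ HLR] Hr]; rewrite Hr in HLR; auto | intros [-> HLR]; auto].
      - rewrite (Pr_empty P (fun w => inDalpha w /\ Rv w = i)),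
                (Pr_empty P (fun w => (1 <= Rv w <= N)%nat /\ Rv w = i))
          by (intros w [Hw Hr]; unfold inDalpha in Hw; rewrite Hr in Hw; tauto).
        ring. }
    rewrite (Pr_ext P (fun w => inDalpha w /\ (1 <= Rv w <= N)%nat) inDalpha)
      by (unfold inDalpha; tauto).
    rewrite Hsize; split; [field; lra|]; split; [exact Htail|].
    apply Rle_ge, Rmult_le_compat_r; [lra | apply Rge_le, Htail].
Qed.
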